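(* Assume the setup in the context, with the fine-tuning regime and local smoothness with radius $r\ge 2\sqrt{C}$. Let $0<\epsilon\le 1$ be such that $|\langle\tau_i,\tau_j\rangle|\le\epsilon\|\tau_i\|\|\tau_j\|$ for all $i\neq j$. Let $\alpha_1,\dots,\alpha_T\ge 0$ with $\sum_{i=1}^T\alpha_i=1$, and set $\theta^T_{\mathrm{Add}}=\theta_0+\sum_{i=1}^T\alpha_i\tau_i$. Then for every $i\in[T]$, $$\mathcal{L}_i(\theta^T_{\mathrm{Add}})-\mathcal{L}_i(\theta_i)\le L_iC(1+\epsilon).$$
   Context: Setup: $\theta_0\in\mathbb{R}^d$ is a pretrained parameter vector; $\theta_1,\dots,\theta_T\in\mathbb{R}^d$ are fine-tuned parameters and $\tau_i:=\theta_i-\theta_0$ are task vectors. For each task $i$, $\mathcal{L}_i:\mathbb{R}^d\to\mathbb{R}$ is a differentiable loss (population risk). Norms are Euclidean. Fine-tuning regime: $\nabla\mathcal{L}_i(\theta_i)=0$ for all $i\in[T]$, and there is $C>0$ with $\|\tau_i\|^2\le C$ for all $i$. Local smoothness with radius $r>0$: for each $i$ there is $L_i\ge 0$ such that for all $\theta$ with $\|\theta-\theta_i\|\le r$, $\big|\mathcal{L}_i(\theta)-\mathcal{L}_i(\theta_i)-\langle\theta-\theta_i,\nabla\mathcal{L}_i(\theta_i)\rangle\big|\le\frac{L_i}{2}\|\theta-\theta_i\|^2$. *)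

From HB Require Import structures.
From mathcomp Require Import all_boot all_order all_algebra.
From mathcomp Require Import all_classical all_reals all_analysis.
Set Implicit Arguments. Unset Strict Implicit. Unset Printing Implicit Defensive.
Import Order.TTheory GRing.Theory Num.Theory.
Import numFieldNormedType.Exports.
Local Open Scope ring_scope.

Definition dotv {R : realType} {d : nat} (u v : 'rV[R]_d) : R :=
  \sum_(j < d) u ord0 j * v ord0 j.

(* Euclidean norm on R^d (the library's norm on 'rV is the sup norm) *)
Definition enorm {R : realType} {d : nat} (u : 'rV[R]_d) : R :=
  Num.sqrt (dotv u u).

From HB Require Import structures.
From mathcomp Require Import all_boot all_order all_algebra.
From mathcomp Require Import all_classical all_reals all_analysis.
From mathcomp Require Import lra.
Import Order.TTheory GRing.Theory Num.Theory.
Import numFieldNormedType.Exports.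
Local Open Scope ring_scope.

(* The merged point differs from theta_i by the convex combination of the
   differences tau_j - tau_i.  Near-orthogonality bounds each of these by
   ||tau_j - tau_i||^2 <= 2C(1 + eps), and the squared Euclidean norm of a
   convex combination is at most the largest squared norm of its terms.  As
   eps <= 1, the merged point lies within distance 2 sqrt C <= r of theta_i,
   where the smoothness bound applies; as the gradient vanishes at theta_i it gives
   L_i(merged) - L_i(theta_i) <= L_i / 2 * 2C(1 + eps). *)

Lemma convex_sum_le (R : numDomainType) (I : finType) (a f : I -> R) (K : R) :
  (forall j, 0 <= a j) -> \sum_j a j = 1 -> (forall j, f j <= K) ->
  \sum_j a j * f j <= K.
Proof.
move=> a_ge0 a_sum1 f_le.
rewrite -[leRHS]mul1r -a_sum1 mulr_suml.
by apply: ler_sum => j _; apply: ler_wpM2l.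
Qed.

Lemma scaler_sumrB_convex (R : pzRingType) (V : lmodType R) (I : finType)
    (a : I -> R) (u : I -> V) (w : V) :
  \sum_j a j = 1 -> \sum_j a j *: (u j - w) = \sum_j a j *: u j - w.
Proof.
move=> a_sum1; under eq_bigr do rewrite scalerBr.
by rewrite sumrB -scaler_suml a_sum1 scale1r.
Qed.

Section EuclideanInnerProduct.
Variables (R : realType) (d : nat).
Implicit Types u v w : 'rV[R]_d.

Lemma dotvC u v : dotv u v = dotv v u.
Proof. by apply: eq_bigr => j _; rewrite mulrC. Qed.

Lemma dotvDl u v w : dotv (u + v) w = dotv u w + dotv v w.
Proof. by rewrite /dotv -big_split; apply: eq_bigr => j _; rewrite mxE mulrDl. Qed.

Lemma dotvZl a u w : dotv (a *: u) w = a * dotv u w.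
Proof. by rewrite /dotv mulr_sumr; apply: eq_bigr => j _; rewrite mxE mulrA. Qed.

Lemma dotvBl u v w : dotv (u - v) w = dotv u w - dotv v w.
Proof. by rewrite dotvDl -scaleN1r dotvZl mulN1r. Qed.

Lemma dotv0l w : dotv 0 w = 0.
Proof. by rewrite -(scale0r 0) dotvZl mul0r. Qed.

Lemma dotv_suml (I : finType) (f : I -> 'rV[R]_d) w :
  dotv (\sum_i f i) w = \sum_i dotv (f i) w.
Proof.
apply: (big_morph (dotv ^~ w)) => [u v|]; first exact: dotvDl.
exact: dotv0l.
Qed.

Lemma dotv_sumr (I : finType) (f : I -> 'rV[R]_d) w :
  dotv w (\sum_i f i) = \sum_i dotv w (f i).
Proof. by rewrite dotvC dotv_suml; apply: eq_bigr => i _; rewrite dotvC. Qed.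

Lemma dotvv_ge0 u : 0 <= dotv u u.
Proof. by apply: sumr_ge0 => j _; rewrite -expr2 sqr_ge0. Qed.

Lemma enorm_ge0 u : 0 <= enorm u.
Proof. exact: sqrtr_ge0. Qed.

Lemma enorm_sqr u : enorm u ^+ 2 = dotv u u.
Proof. by rewrite sqr_sqrtr // dotvv_ge0. Qed.

Lemma dotvvB u v : dotv (u - v) (u - v) = dotv u u - 2 * dotv u v + dotv v v.
Proof. by rewrite dotvBl !(dotvC _ (u - v)) !dotvBl (dotvC v u); lra. Qed.

Lemma dotv_le_mean u v : dotv u v <= (dotv u u + dotv v v) / 2.
Proof. by have := dotvv_ge0 (u - v); rewrite dotvvB ler_pdivlMr //; lra. Qed.

Lemma dotvv_convex_le (I : finType) (a : I -> R) (v : I -> 'rV[R]_d) (K : R) :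
  (forall j, 0 <= a j) -> \sum_j a j = 1 -> (forall j, dotv (v j) (v j) <= K) ->
  dotv (\sum_j a j *: v j) (\sum_j a j *: v j) <= K.
Proof.
move=> a_ge0 a_sum1 v_le; rewrite dotv_suml.
under eq_bigr do rewrite dotvZl dotv_sumr.
apply: convex_sum_le => // j.
under eq_bigr do rewrite dotvC dotvZl dotvC.
apply: convex_sum_le => // k.
by apply: le_trans (dotv_le_mean _ _) _; have := v_le j; have := v_le k; lra.
Qed.

Lemma dotvvB_near_orthogonal u v (C eps : R) :
  0 <= eps -> enorm u ^+ 2 <= C -> enorm v ^+ 2 <= C ->
  `|dotv u v| <= eps * enorm u * enorm v ->
  dotv (u - v) (u - v) <= 2 * C * (1 + eps).
Proof.
move=> eps_ge0 uC vC uv_le.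
have [u_ge0 v_ge0] := (enorm_ge0 u, enorm_ge0 v).
have uvC : enorm u * enorm v <= C by have := sqr_ge0 (enorm u - enorm v); nra.
have epsC : eps * enorm u * enorm v <= eps * C by rewrite -mulrA ler_wpM2l.
have := lerNnormlW uv_le; rewrite dotvvB -!enorm_sqr; nra.
Qed.

Lemma enorm_le_2sqrt u (C : R) : 0 <= C -> dotv u u <= 4 * C ->
  enorm u <= 2 * Num.sqrt C.
Proof.
move=> C_ge0 uC; rewrite -ler_sqr ?nnegrE ?enorm_ge0 ?mulr_ge0 ?sqrtr_ge0 //.
by rewrite enorm_sqr exprMn sqr_sqrtr //; lra.
Qed.

End EuclideanInnerProduct.

Theorem mainTheorem4 (R : realType) (d T : nat)
  (theta0 : 'rV[R]_d) (theta : 'I_T -> 'rV[R]_d)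
  (Loss : 'I_T -> 'rV[R]_d -> R)
  (C r eps : R) (Lsm : 'I_T -> R) (alpha : 'I_T -> R) :
  (* each loss is differentiable *)
  (forall i x, differentiable (Loss i) x) ->
  (* fine-tuning regime: gradient vanishes at theta_i, and ||tau_i||^2 <= C *)
  (forall i v, 'd (Loss i) (theta i) v = 0) ->
  0 < C ->
  (forall i, enorm (theta i - theta0) ^+ 2 <= C) ->
  (* local smoothness with radius r >= 2 sqrt C *)
  0 < r -> 2 * Num.sqrt C <= r ->
  (forall i, 0 <= Lsm i) ->
  (forall i th, enorm (th - theta i) <= r ->
     `| Loss i th - Loss i (theta i) - 'd (Loss i) (theta i) (th - theta i) |
       <= Lsm i / 2 * enorm (th - theta i) ^+ 2) ->
  (* near-orthogonality of task vectors *)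
  0 < eps -> eps <= 1 ->
  (forall i j, i != j ->
     `| dotv (theta i - theta0) (theta j - theta0) |
       <= eps * enorm (theta i - theta0) * enorm (theta j - theta0)) ->
  (* convex weights *)
  (forall i, 0 <= alpha i) -> \sum_(i < T) alpha i = 1 ->
  forall i : 'I_T,
    Loss i (theta0 + \sum_(j < T) alpha j *: (theta j - theta0)) - Loss i (theta i)
      <= Lsm i * C * (1 + eps).
Proof.
move=> _ grad0 C_gt0 tauC _ sqrtC_le_r Lsm_ge0 smooth eps_gt0 eps_le1 orth
  alpha_ge0 alpha_sum1 i.
set tau := fun j => theta j - theta0.
set merged := theta0 + _.
have merged_sub : merged - theta i = \sum_j alpha j *: (tau j - tau i).
  rewrite /merged /tau !scaler_sumrB_convex //.
  by rewrite [theta0 + _]addrC subrK opprB addrA subrK.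
have diff_le j : dotv (tau j - tau i) (tau j - tau i) <= 2 * C * (1 + eps).
  have [->|ji] := eqVneq j i; last exact: dotvvB_near_orthogonal (ltW _) _ _ (orth _ _ ji).
  by rewrite subrr dotv0l; apply: mulr_ge0; lra.
have dist_le : dotv (merged - theta i) (merged - theta i) <= 2 * C * (1 + eps).
  by rewrite merged_sub; apply: dotvv_convex_le.
have in_ball : enorm (merged - theta i) <= r.
  by apply: le_trans sqrtC_le_r; apply: enorm_le_2sqrt; nra.
have := smooth i merged in_ball; rewrite grad0 subr0 enorm_sqr => taylor.
apply: le_trans (ler_norm _) _; apply: le_trans taylor _.
have half_ge0 : 0 <= Lsm i / 2 by rewrite divr_ge0.
by apply: le_trans (ler_wpM2l half_ge0 dist_le) _; rewrite !mulrA divfK ?pnatr_eq0.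
Qed.
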